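(* Let $\alpha>1$ be fixed. For a positive integer $n$ let $A=\{1,2,\dots,2^n\}$, $B=\{1,2,\dots,\lfloor n^{\alpha}\rfloor\}$, let $P_n$ be the set of primes $p\le n^{\alpha}$, and define the family $H(n)=\{h_p:A\to B\}_{p\in P_n}$ by $h_p(a)=(a\bmod p)+1$, where $a\bmod p$ is the remainder of $a$ upon division by $p$. Then for all sufficiently large $n$, the family $H(n)$ is $\frac{\alpha}{n^{\alpha-1}}$-almost universal.
   Context: A family $\{h_p:X\to Y\}_{p\in P}$ indexed by a finite set $P$ is $\varepsilon$-almost universal if for all distinct $x_1,x_2\in X$, $|\{p\in P : h_p(x_1)=h_p(x_2)\}|\le\varepsilon|P|$; equivalently, for $p$ drawn uniformly from $P$, $\Pr[h_p(x_1)=h_p(x_2)]\le\varepsilon$. *)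

From mathcomp Require Import all_boot all_order all_algebra.
From mathcomp Require Import reals exp.
Set Implicit Arguments. Unset Strict Implicit. Unset Printing Implicit Defensive.
Import Order.TTheory GRing.Theory Num.Theory.
Local Open Scope ring_scope.

Definition almost_universal (R : realType) (X : pred nat) (P : seq nat)
  (h : nat -> nat -> nat) (eps : R) : Prop :=
  forall x1 x2 : nat, x1 \in X -> x2 \in X -> x1 != x2 ->
    (count (fun p => h p x1 == h p x2) P)%:R <= eps * (size P)%:R.

Definition domA (n : nat) : pred nat := fun a => (1 <= a <= 2 ^ n)%N.

(* P_n = primes p <= n^alpha (listed increasingly; the iota bound only
   ensures finiteness, since p <= n^alpha implies p <= floor(n^alpha)). *)
Definition primesP (R : realType) (alpha : R) (n : nat) : seq nat :=
  [seq p <- iota 0 (Num.truncn (powR (n%:R : R) alpha)).+1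
     | prime p && ((p%:R : R) <= powR (n%:R : R) alpha)].

Definition hmod (p a : nat) : nat := ((a %% p) + 1)%N.

From mathcomp Require Import all_boot all_order all_algebra.
From mathcomp Require Import reals exp.
From mathcomp Require Import zify ring lra.

Set Implicit Arguments.
Unset Strict Implicit.
Unset Printing Implicit Defensive.

Import Order.TTheory GRing.Theory Num.Theory.

(* Two points a < b of A collide under h_p exactly when p divides b - a, a
   number in (0, 2^n).  Splitting its prime divisors at 2^s, at most 2^s are
   small, and at most n/s are large since their product divides b - a; with
   s ~ (15/16) log2 n this is about (16/15) n / log2 n.  On the other side,
   Chebyshev's argument with the integers (30m)! m! / ((15m)! (10m)! (6m)!),
   which grow by a factor at least 2^38 from m to m + 1 while every prime
   power dividing them is at most 30m, gives pi(X) >= (38/30) X / log2 X up to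
   lower-order terms.  For X = n^alpha the target bound alpha n^(1-alpha) pi(X)
   is then about (38/30) n / log2 n, and 38/30 > 16/15. *)

Definition primepi (N : nat) : nat := count prime (iota 0 N.+1).

Lemma primepi_mono : {homo primepi : M N / M <= N}.
Proof.
move=> M N le_MN; rewrite /primepi -(subnKC le_MN) -addSn iotaD count_cat.
exact: leq_addr.
Qed.

Lemma prodn_const_seq (r : seq nat) c : \prod_(i <- r) c = c ^ size r.
Proof. by rewrite big_const_seq count_predT iter_muln_1. Qed.

Lemma leq_expn_primepi C N : 0 < C -> 0 < N ->
  (forall p, prime p -> logn p C <= trunc_log p N) -> C <= N ^ primepi N.
Proof.
move=> C_gt0 N_gt0 logC_le.
rewrite [C in C <= _]prod_prime_decomp // prime_decompE big_map /=.
have primeC_le p : p \in primes C -> [/\ prime p, p <= N & p ^ logn p C <= N].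
  move=> pC; have p_pr : prime p by move: pC; rewrite mem_primes => /andP[].
  have pC_le : p ^ logn p C <= N.
    apply: leq_trans (trunc_logP (prime_gt1 p_pr) N_gt0).
    by rewrite leq_exp2l ?prime_gt1 ?logC_le.
  split=> //; apply: leq_trans pC_le; rewrite -[leqLHS]expn1 leq_exp2l ?prime_gt1 //.
  by rewrite logn_gt0.
apply: leq_trans (_ : \prod_(p <- primes C) N <= _).
  by rewrite big_seq_cond [leqRHS]big_seq_cond; apply: leq_prod => p /andP[/primeC_le[]].
rewrite prodn_const_seq leq_pexp2l // /primepi -size_filter.
apply: uniq_leq_size (primes_uniq C) _ => p /primeC_le[p_pr le_pN _].
by rewrite mem_filter mem_iota ltnS p_pr le_pN.
Qed.

Lemma logn_fact_wide p a K : prime p -> a <= K ->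
  logn p a`! = \sum_(1 <= k < K.+1) a %/ p ^ k.
Proof.
move=> p_pr le_aK; rewrite logn_fact // [RHS](@big_cat_nat _ _ _ a.+1) //=.
rewrite [X in _ = _ + X]big1_seq ?addn0 // => k /andP[_].
rewrite mem_index_iota => /andP[lt_ak _]; rewrite divn_small //.
by rewrite (leq_trans lt_ak) // ltnW // ltn_expl // prime_gt1.
Qed.

Lemma sum_indicator_leq K t : \sum_(1 <= k < K.+1) (k <= t) <= t.
Proof.
suff: \sum_(1 <= k < K.+1) (k <= t) <= minn K t by move/leq_trans; apply; exact: geq_minr.
elim: K => [|K IH]; first by rewrite big_geq.
rewrite big_nat_recr //=; case: (leqP K.+1 t) => _; lia.
Qed.

Lemma sum_divn_expn_gt0 p N K : 1 < p ->
  \sum_(1 <= k < K.+1) (0 < N %/ p ^ k) <= trunc_log p N.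
Proof.
move=> p_gt1; apply: leq_trans (sum_indicator_leq K (trunc_log p N)).
apply: leq_sum => k _; rewrite divn_gt0 ?expn_gt0 ?(ltnW p_gt1) //.
by case: (leqP (p ^ k) N) => // le_pkN; rewrite (trunc_log_max p_gt1 le_pkN).
Qed.

Lemma divn_2_3_5_30 A :
  A %/ 2 + A %/ 3 + A %/ 5 <= A + A %/ 30 <= A %/ 2 + A %/ 3 + A %/ 5 + (0 < A).
Proof. by apply/andP; split; lia. Qed.

Lemma divn_mul_scale c d m q : c * d = 30 -> c * m %/ q = 30 * m %/ q %/ d.
Proof.
move=> cd30; have d_gt0 : 0 < d by case: d cd30 => //; rewrite muln0.
by rewrite -divnMA -cd30 [c * d]mulnC -mulnA [q * d]mulnC divnMl.
Qed.

Lemma fact_mulS c m : (c * m.+1)`! = (c * m.+1) ^_ c * (c * m)`!.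
Proof. by rewrite -{1}(ffact_fact (leq_pmulr c (ltn0Sn m))) mulnS addKn. Qed.

Lemma ffact_leq_expn n k : n ^_ k <= n ^ k.
Proof.
rewrite ffact_prod -[leqRHS]iter_muln_1 -big_const_ord.
by apply: leq_prod => i _; exact: leq_subr.
Qed.

Lemma expn_leq_ffact n k : (n - k) ^ k <= n ^_ k.
Proof.
rewrite ffact_prod -[leqLHS]iter_muln_1 -big_const_ord.
by apply: leq_prod => i _; rewrite leq_sub2l // ltnW.
Qed.

Lemma bernoulli_expn k m : k <= m -> m.+1 ^ k * (m - k) <= m ^ k.+1.
Proof.
elim: k => [|k IH] le_km; first by rewrite expn0 mul1n subn0 expn1.
have le_km' := ltnW le_km.
apply: leq_trans (_ : _ <= m.+1 ^ k * (m * (m - k))) _.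
  rewrite expnSr -mulnA leq_mul2l; apply/orP; right.
  by rewrite -(subnSK le_km) mulSn mulnS leq_add2r leq_subr.
by rewrite mulnCA [leqRHS]expnS leq_mul2l (IH le_km') orbT.
Qed.

Lemma expnS_leq_double m : 60 <= m -> m.+1 ^ 30 <= 2 * m ^ 30.
Proof.
move=> m_ge60; have m_gt0 : 0 < m by apply: leq_trans m_ge60.
rewrite -(leq_pmul2r m_gt0) -mulnA -expnSr.
apply: leq_trans (_ : _ <= m.+1 ^ 30 * (2 * (m - 30))) _.
  by rewrite leq_mul2l; apply/orP; right; lia.
by rewrite mulnCA leq_mul2l bernoulli_expn ?orbT // (leq_trans _ m_ge60).
Qed.

Lemma expn_growth (f : nat -> nat) c m0 :
  (forall m, m0 <= m -> c * f m <= f m.+1) -> forall k, c ^ k * f m0 <= f (k + m0).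
Proof.
move=> step; elim=> [|k IH]; first by rewrite mul1n.
by rewrite expnS -mulnA (leq_trans (leq_mul (leqnn c) IH)) // addSn step // leq_addl.
Qed.

Definition cheb_num m := (30 * m)`! * m`!.
Definition cheb_den m := (15 * m)`! * (10 * m)`! * (6 * m)`!.

Lemma cheb_num_gt0 m : 0 < cheb_num m.
Proof. by rewrite muln_gt0 !fact_gt0. Qed.

Lemma cheb_den_gt0 m : 0 < cheb_den m.
Proof. by rewrite !muln_gt0 !fact_gt0. Qed.

Lemma logn_cheb_bounds p m : prime p ->
  logn p (cheb_den m) <= logn p (cheb_num m)
    <= logn p (cheb_den m) + trunc_log p (30 * m).
Proof.
move=> p_pr; pose A k := 30 * m %/ p ^ k.
have logn_fact_A c d : c * d = 30 ->
    logn p (c * m)`! = \sum_(1 <= k < (30 * m).+1) A k %/ d.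
  move=> cd30; have d_gt0 : 0 < d by case: d cd30 => //; rewrite muln0.
  rewrite (@logn_fact_wide _ _ (30 * m)) ?leq_mul2r -?cd30 ?leq_pmulr ?orbT //.
  by apply: eq_bigr => k _; rewrite (divn_mul_scale m _ cd30).
have lognF : logn p (cheb_num m) = \sum_(1 <= k < (30 * m).+1) (A k + A k %/ 30).
  rewrite lognM ?fact_gt0 // big_split (logn_fact_A 30 1) // -(logn_fact_A 1 30) //.
  by rewrite mul1n; under eq_bigr do rewrite divn1.
have lognD : logn p (cheb_den m) =
    \sum_(1 <= k < (30 * m).+1) (A k %/ 2 + A k %/ 3 + A k %/ 5).
  rewrite !lognM ?muln_gt0 ?fact_gt0 // !big_split.
  by rewrite (logn_fact_A 15 2) // (logn_fact_A 10 3) // (logn_fact_A 6 5).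
rewrite lognF lognD; apply/andP; split.
  by apply: leq_sum => k _; case/andP: (divn_2_3_5_30 (A k)).
apply: leq_trans (_ : _ <= \sum_(1 <= k < (30 * m).+1)
    (A k %/ 2 + A k %/ 3 + A k %/ 5 + (0 < A k))) _.
  by apply: leq_sum => k _; case/andP: (divn_2_3_5_30 (A k)).
by rewrite big_split leq_add2l sum_divn_expn_gt0 ?prime_gt1.
Qed.

Lemma cheb_den_dvdn m : cheb_den m %| cheb_num m.
Proof.
apply/(dvdn_partP _ (cheb_den_gt0 m)) => p; rewrite mem_primes => /andP[p_pr _].
rewrite p_part pfactor_dvdn ?cheb_num_gt0 //.
by case/andP: (logn_cheb_bounds m p_pr).
Qed.

Definition cheb m := cheb_num m %/ cheb_den m.

Lemma cheb_gt0 m : 0 < cheb m.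
Proof. by rewrite divn_gt0 ?cheb_den_gt0 // dvdn_leq ?cheb_num_gt0 ?cheb_den_dvdn. Qed.

Lemma cheb_leq_expn_primepi m : 0 < m -> cheb m <= (30 * m) ^ primepi (30 * m).
Proof.
move=> m_gt0; apply: leq_expn_primepi; rewrite ?cheb_gt0 ?muln_gt0 // => p p_pr.
rewrite logn_div ?cheb_den_dvdn // leq_subLR.
by case/andP: (logn_cheb_bounds m p_pr).
Qed.

Lemma cheb_num_S m : cheb_num m.+1 = cheb_num m * ((30 * m.+1) ^_ 30 * m.+1).
Proof. by rewrite /cheb_num fact_mulS factS; ring. Qed.

Lemma cheb_den_S m : cheb_den m.+1 =
  cheb_den m * ((15 * m.+1) ^_ 15 * (10 * m.+1) ^_ 10 * (6 * m.+1) ^_ 6).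
Proof. by rewrite /cheb_den !fact_mulS; ring. Qed.

Lemma ffact_ratio_ge m : 60 <= m ->
  2 ^ 38 * ((15 * m.+1) ^_ 15 * (10 * m.+1) ^_ 10 * (6 * m.+1) ^_ 6)
    <= (30 * m.+1) ^_ 30 * m.+1.
Proof.
move=> m_ge60.
(* Numerals such as 15 ^ 15 are unary [nat]s: they stay behind variables and
   [leqnn] so that neither [ring] nor conversion ever evaluates them. *)
have ffact_le c : (c * m.+1) ^_ c <= c ^ c * m.+1 ^ c by rewrite -expnMn ffact_leq_expn.
have regroup a b c x : a ^ 15 * x ^ 15 * (b ^ 10 * x ^ 10) * (c ^ 6 * x ^ 6)
    = a ^ 15 * b ^ 10 * c ^ 6 * (x ^ 30 * x) by ring.
have factors_le : (15 * m.+1) ^_ 15 * (10 * m.+1) ^_ 10 * (6 * m.+1) ^_ 6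
    <= 15 ^ 15 * 10 ^ 10 * 6 ^ 6 * (2 * m ^ 30 * m.+1).
  apply: leq_trans (leq_mul (leq_mul (ffact_le 15) (ffact_le 10)) (ffact_le 6)) _.
  rewrite regroup; apply: leq_mul (leqnn _) (leq_mul _ (leqnn _)).
  exact: expnS_leq_double.
have reassoc a b x y : a * (b * (2 * x * y)) = a * b * 2 * (x * y) by ring.
have constant_le : 2 ^ 38 * (15 ^ 15 * 10 ^ 10 * 6 ^ 6) * 2 <= 30 ^ 30 by lia.
apply: leq_trans (leq_mul (leqnn _) factors_le) _; rewrite reassoc.
move: (leq_mul constant_le (leqnn (m ^ 30 * m.+1))) => /leq_trans; apply.
rewrite mulnA -expnMn.
move: (leq_mul (expn_leq_ffact (30 * m.+1) 30) (leqnn m.+1)).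
by rewrite [30 * m.+1]mulnS addKn; apply.
Qed.

Lemma cheb_step m : 60 <= m -> 2 ^ 38 * cheb m <= cheb m.+1.
Proof.
move=> m_ge60; have := cheb_den_gt0 m.+1; rewrite /cheb cheb_num_S cheb_den_S.
set a := (30 * m.+1) ^_ 30 * m.+1; set b := _ * (6 * m.+1) ^_ 6.
rewrite muln_gt0 => /andP[_ b_gt0].
rewrite -{2}(divnK (cheb_den_dvdn m)) [_ * cheb_den m]mulnC -mulnA.
rewrite divnMl ?cheb_den_gt0 // leq_divRL //.
by rewrite mulnAC [_ * a]mulnC leq_mul2r ffact_ratio_ge ?orbT.
Qed.

Lemma primepi_mul30_ge m : 60 <= m ->
  38 * (m - 60) <= (trunc_log 2 (30 * m)).+1 * primepi (30 * m).
Proof.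
move=> m_ge60; have m_gt0 : 0 < m by apply: leq_trans m_ge60.
rewrite -(leq_exp2l _ _ (ltnSn 1)) [leqRHS]expnM.
apply: leq_trans (_ : cheb m <= _).
  rewrite expnM; apply: leq_trans (_ : _ <= (2 ^ 38) ^ (m - 60) * cheb 60) _.
    by rewrite leq_pmulr ?cheb_gt0.
  by rewrite -{2}(subnK m_ge60); exact: expn_growth cheb_step (m - 60).
apply: leq_trans (cheb_leq_expn_primepi m_gt0) _.
case: (primepi (30 * m)) => [|k]; first by [].
by rewrite leq_exp2r // ltnW // trunc_log_ltn.
Qed.

(* 38 * 1830 = 38 * 30 * 61 pays for the first 60 steps of the recursion and
   for rounding X down to a multiple of 30. *)
Lemma primepi_ge X : 1800 <= X ->
  38 * X.+1 <= 30 * (trunc_log 2 X).+1 * primepi X + 38 * 1830.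
Proof.
move=> X_ge1800; set m := X %/ 30.
have m_ge60 : 60 <= m by rewrite leq_divRL.
have le_30m_X : 30 * m <= X by rewrite mulnC leq_divM.
have lt_X_30m : X < 30 * m.+1 by rewrite mulnC ltn_ceil.
have pi_ge : 38 * (m - 60) <= (trunc_log 2 X).+1 * primepi X.
  apply: leq_trans (primepi_mul30_ge m_ge60) (leq_mul _ (primepi_mono le_30m_X)).
  by rewrite ltnS leq_trunc_log.
rewrite -mulnA; lia.
Qed.

Lemma prod_primes_dvdn (Q : seq nat) d : uniq Q -> all prime Q ->
  (forall p, p \in Q -> p %| d) -> \prod_(p <- Q) p %| d.
Proof.
elim: Q => [|p Q IH] /=; first by rewrite big_nil dvd1n.
case/andP=> pQ uQ /andP[p_pr Q_pr] dvdQ; rewrite big_cons Gauss_dvd.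
  by rewrite dvdQ ?mem_head // IH // => q qQ; rewrite dvdQ // in_cons qQ orbT.
rewrite big_seq; apply: (big_ind (coprime p)) => [|a b pa pb|q qQ]; first exact: coprimen1.
  by rewrite coprimeMr pa.
have q_pr : prime q := allP Q_pr q qQ.
rewrite prime_coprime // dvdn_prime2 //.
by apply: contraNneq pQ => ->.
Qed.

Lemma count_prime_dvdn_le (P : seq nat) d n s : uniq P -> all prime P ->
  0 < d < 2 ^ n -> 0 < s -> count (fun p => p %| d) P <= 2 ^ s + n %/ s.
Proof.
move=> uP P_pr /andP[d_gt0 lt_d_2n] s_gt0.
set Q := filter (fun p => p %| d) P; have uQ : uniq Q by rewrite filter_uniq.
rewrite -size_filter -/Q -(count_predC (fun p => p < 2 ^ s) Q); apply: leq_add.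
  rewrite -size_filter -[leqRHS](size_iota 0); apply: uniq_leq_size; first exact: filter_uniq.
  by move=> p; rewrite mem_filter mem_iota => /andP[].
rewrite -size_filter leq_divRL //; set Q' := filter _ Q.
have Q'_dvd : \prod_(p <- Q') p %| d.
  apply: prod_primes_dvdn; first by rewrite !filter_uniq.
    by apply/allP => p; rewrite !mem_filter => /and3P[_ _ /(allP P_pr)].
  by move=> p; rewrite !mem_filter => /and3P[].
have : 2 ^ (s * size Q') < 2 ^ n.
  rewrite expnM -prodn_const_seq; apply: leq_ltn_trans (leq_trans _ (dvdn_leq d_gt0 Q'_dvd)) lt_d_2n.
  rewrite big_seq_cond [leqRHS]big_seq_cond; apply: leq_prod => p.
  by rewrite andbT !mem_filter /= -leqNgt => /andP[].
by rewrite ltn_exp2l // mulnC => /ltnW.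
Qed.

Lemma expn2_ge_linear k : 14 <= k -> 480 * k + 510 <= 2 ^ k.
Proof.
elim: k => [//|k IH]; rewrite leq_eqVlt => /orP[/eqP <- //|].
by rewrite ltnS expnS => /IH; lia.
Qed.

Lemma divisor_count_budget L n : 224 <= L -> 2 ^ L <= n ->
  30 * (L + 2) * (2 ^ (L - L %/ 16) + n %/ (L - L %/ 16)) + 38 * 1830 <= 38 * n.
Proof.
move=> L_ge224 le_2L_n; set s := L - L %/ 16.
have small_le : 30 * (L + 2) * 2 ^ s <= n.
  apply: leq_trans le_2L_n; apply: leq_trans (_ : 2 ^ (L %/ 16) * 2 ^ s <= _).
    rewrite leq_mul2r; apply/orP; right.
    by apply: leq_trans (_ : _ <= 480 * (L %/ 16) + 510) (expn2_ge_linear _); lia.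
  by rewrite -expnD /s subnKC // leq_div.
have large_le : 30 * (L + 2) * (n %/ s) <= 34 * n.
  apply: leq_trans (_ : 34 * s * (n %/ s) <= _); first by rewrite leq_mul2r /s; lia.
  by rewrite -mulnA leq_mul2l mulnC leq_divM orbT.
have n_ge : 2 ^ 17 <= n.
  by apply: leq_trans le_2L_n; rewrite leq_pexp2l // (leq_trans _ L_ge224).
rewrite mulnDr; lia.
Qed.

Lemma hmod_eq_dvdn p a b : a <= b -> (hmod p a == hmod p b) = (p %| b - a).
Proof. by move=> le_ab; rewrite /hmod eqn_add2r eq_sym eqn_mod_dvd. Qed.

Lemma hmod_collision_dvdn n a b : a \in domA n -> b \in domA n -> a != b ->
  exists2 d, 0 < d < 2 ^ n & forall p, (hmod p a == hmod p b) = (p %| d).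
Proof.
wlog lt_ab : a b / a < b.
  move=> wlog_ab Aa Ab ab; have [lt_ab|lt_ba|eq_ab] := ltngtP a b.
  - exact: wlog_ab.
  - have [d d_bounds hmod_d] := wlog_ab b a lt_ba Ab Aa (negbT (ltn_eqF lt_ba)).
    by exists d => // p; rewrite eq_sym.
  - by rewrite eq_ab eqxx in ab.
rewrite !unfold_in /domA => /andP[a_ge1 _] /andP[_ b_le] _.
exists (b - a); first by apply/andP; split; lia.
by move=> p; rewrite hmod_eq_dvdn // ltnW.
Qed.

Local Open Scope ring_scope.

Section PowerBounds.
Variables (R : realType) (alpha : R).

Lemma size_primesP n :
  size (primesP alpha n) = primepi (Num.truncn (powR n%:R alpha)).
Proof.
rewrite /primesP size_filter /primepi; apply: eq_in_count => p.
rewrite mem_iota ltnS => /= le_p; case: (prime p) => //=.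
by rewrite -truncn_ge_nat // powR_ge0.
Qed.

Lemma primesP_uniq n : uniq (primesP alpha n).
Proof. by rewrite filter_uniq // iota_uniq. Qed.

Lemma primesP_prime n : all prime (primesP alpha n).
Proof. by apply/allP => p; rewrite mem_filter => /andP[/andP[]]. Qed.

Lemma trunc_log_truncn_powR n : (0 < n)%N -> 0 <= alpha ->
  (trunc_log 2 (Num.truncn (powR n%:R alpha)))%:R <= alpha * (trunc_log 2 n).+1%:R.
Proof.
move=> n_gt0 alpha_ge0; set x := powR n%:R alpha; set X := Num.truncn x.
have [->|X_gt0] := posnP X; first by rewrite trunc_log0 mulr_ge0.
have ln2_gt0 : 0 < ln (2 : R) by rewrite ln_gt0 // ltr1n.
have pow2_gt0 k : 0 < (2 : R) ^+ k by rewrite exprn_gt0.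
have X_le_x : (X%:R : R) <= x by rewrite truncn_le powR_ge0.
have le_pow2_x : (2 : R) ^+ trunc_log 2 X <= x.
  by apply: le_trans X_le_x; rewrite -natrX ler_nat trunc_logP.
have n_le_pow2 : (n%:R : R) <= 2 ^+ (trunc_log 2 n).+1.
  by rewrite -natrX ler_nat ltnW // trunc_log_ltn.
rewrite -(ler_pM2r ln2_gt0) -mulrA !mulr_natl -!lnXn ?ltr0n //.
apply: le_trans (_ : ln x <= _).
  by rewrite ler_ln ?posrE // (lt_le_trans (pow2_gt0 _) le_pow2_x).
by rewrite /x ln_powR ler_wpM2l // ler_ln ?posrE ?ltr0n.
Qed.

Lemma primepi_powR_ge n K : 1 <= alpha ->
  (30 * (trunc_log 2 n + 2) * K + 38 * 1830 <= 38 * n)%N ->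
  K%:R * powR n%:R (alpha - 1) <= alpha * (primepi (Num.truncn (powR n%:R alpha)))%:R.
Proof.
move=> alpha_ge1 budget; have n_ge1830 : (1830 <= n)%N by move: budget; lia.
set L := trunc_log 2 n in budget *; set x := powR n%:R alpha; set z := powR n%:R (alpha - 1).
set X := Num.truncn x; set T := trunc_log 2 X; set pi := primepi X.
have n_ge1 : 1 <= n%:R :> R by rewrite ler1n (leq_trans _ n_ge1830).
have z_ge1 : 1 <= z by rewrite -(powRr0 n%:R) ler_powR // subr_ge0.
have x_eq : x = n%:R * z by rewrite mulr_powRB1 // (lt_le_trans ltr01).
have x_lt : x < X.+1%:R by exact: truncnS_gt.
have n_le_X : (n <= X)%N.
  by rewrite truncn_ge_nat ?powR_ge0 // x_eq ler_peMr // (le_trans ler01).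
have pi_ge := primepi_ge (leq_trans (leq_trans (isT : 1800 <= 1830)%N n_ge1830) n_le_X).
have T_le := trunc_log_truncn_powR (leq_trans (isT : 0 < 1830)%N n_ge1830) (le_trans ler01 alpha_ge1).
rewrite -/x -/X -/T -/L in T_le pi_ge; rewrite -/pi in pi_ge.
have budgetR : 30 * (L%:R + 2) * K%:R + 38 * 1830 <= 38 * n%:R :> R.
  by rewrite -(natrD _ L 2) -!natrM -natrD ler_nat.
have pi_geR : 38 * X.+1%:R <= 30 * (T%:R + 1) * pi%:R + 38 * 1830 :> R.
  by rewrite natr1 -!natrM -natrD ler_nat.
have budget_z := ler_wpM2r (le_trans ler01 z_ge1) budgetR.
have T_pi_le : (T%:R + 1) * pi%:R <= alpha * (L%:R + 2) * pi%:R.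
  by apply: ler_wpM2r => //; move: T_le; rewrite -natr1; lra.
have L_pos : 0 < 30 * (L%:R + 2) :> R by rewrite mulr_gt0 // ltr_wpDl.
rewrite -(ler_pM2l L_pos); lra.
Qed.

End PowerBounds.

Theorem lemma4 (R : realType) (alpha : R) (halpha : 1 < alpha) :
  exists N : nat, forall n : nat, (N <= n)%N ->
    almost_universal (domA n) (primesP alpha n) hmod
      (alpha / powR (n%:R : R) (alpha - 1)).
Proof.
exists (2 ^ 224)%N => n n_large a b Aa Ab ab.
have [d d_bounds hmodE] := hmod_collision_dvdn Aa Ab ab.
have L_ge224 : (224 <= trunc_log 2 n)%N by rewrite trunc_log_max.
have n_gt0 : (0 < n)%N by rewrite (leq_trans _ n_large) ?expn_gt0.
set L := trunc_log 2 n in L_ge224 *; set s := (L - L %/ 16)%N.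
have z_gt0 : 0 < powR n%:R (alpha - 1) :> R by rewrite powR_gt0 ?ltr0n.
rewrite (eq_count hmodE) mulrAC ler_pdivlMr // size_primesP.
apply: le_trans (_ : (2 ^ s + n %/ s)%:R * powR n%:R (alpha - 1) <= _).
  rewrite ler_wpM2r ?(ltW z_gt0) // ler_nat count_prime_dvdn_le ?primesP_uniq ?primesP_prime //.
  by rewrite /s; lia.
apply: primepi_powR_ge (ltW halpha) (divisor_count_budget L_ge224 _).
exact: trunc_logP.
Qed.
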